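(* Let $a,b\ge1$, $n=a+b+1$, $f=a+1$, and let $G$ be the $n\times n$ symmetric matrix with $G_{ii}=2$ for $i\neq f$, $G_{ff}=0$, $G_{i,i+1}=G_{i+1,i}=-1$ for $1\le i<n$, and all other entries $0$. With $m^S$ defined from $G$, $f$, $r',r''$ by $m^S_{ij}=r'G_{ij}$ for $i,j\le f$, $(i,j)\ne(f,f)$; $m^S_{ij}=r''G_{ij}$ for $i,j\ge f$, $(i,j)\neq(f,f)$; $m^S_{ij}=0$ if $i<f<j$ or $j<f<i$; $m^S_{ff}=1$: the matrix $m^S$ is positive definite with all diagonal entries $\le1$ if and only if $$0<r'\le\tfrac12,\qquad 0<r''\le\tfrac12,\qquad \tfrac{a}{a+1}r'+\tfrac{b}{b+1}r''<1.$$
   Context: This is the standard-chamber Gram matrix for the Lie superalgebra $A(a,b)$ rescaled by $r'$ on the bosonic part of type $A_a$ and by $r''$ on the bosonic part of type $A_b$, with fermionic simple root $\alpha_f$ of squared length $1$. *)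

From HB Require Import structures.
From mathcomp Require Import all_boot all_order all_algebra.
Set Implicit Arguments. Unset Strict Implicit. Unset Printing Implicit Defensive.
Import Order.TTheory GRing.Theory Num.Theory.
Local Open Scope ring_scope.

(* Indices are 0-based: 'I_(a+b+1), the fermionic index f = a+1 (1-based)
   becomes a (0-based). *)

Definition gramG (R : pzRingType) (a b : nat) : 'M[R]_(a + b + 1) :=
  \matrix_(i, j)
    if i == j then (if (i : nat) == a then 0 else 2%:R)
    else if ((i : nat).+1 == j) || ((j : nat).+1 == i) then -1 else 0.

Definition mS (R : pzRingType) (a b : nat) (r1 r2 : R) : 'M[R]_(a + b + 1) :=
  \matrix_(i, j)
    if ((i : nat) == a) && ((j : nat) == a) then 1
    else if ((i : nat) <= a)%N && ((j : nat) <= a)%N then r1 * gramG R a b i j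
    else if (a <= (i : nat))%N && (a <= (j : nat))%N then r2 * gramG R a b i j
    else 0.

Definition posdef (R : realFieldType) (n : nat) (M : 'M[R]_n) : Prop :=
  forall x : 'rV[R]_n, x != 0 -> 0 < (x *m M *m x^T) 0 0.
Arguments gramG R a b : clear implicits.
Arguments mS R a b r1 r2 : clear implicits.

From HB Require Import structures.
From mathcomp Require Import all_boot all_order all_algebra.
From mathcomp Require Import ring lra zify.

(* In the coordinates y_0, ..., y_(a+b) the quadratic form of m^S is
     r' (y_0^2 + sum_(i<a) (y_i - y_(i+1))^2)
   + r'' (y_(a+b)^2 + sum_(a<=i<a+b) (y_i - y_(i+1))^2) + (1 - r' - r'') y_a^2,
   obtained by telescoping the two bosonic blocks.  If r', r'' > 0 and
   r' + r'' <= 1 all three terms are nonnegative, and the vanishing of the two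
   brackets forces y = 0.  Conversely, the diagonal entries 2r' and 2r'' at
   both ends must lie in (0, 1].  The third condition follows from the first
   two because a/(a+1) < 1. *)

Set Implicit Arguments.
Unset Strict Implicit.
Unset Printing Implicit Defensive.
Import Order.TTheory GRing.Theory Num.Theory.
Local Open Scope ring_scope.

Lemma mxqformE (R : comPzRingType) n (x : 'rV[R]_n) (M : 'M[R]_n) :
  (x *m M *m x^T) 0 0 = \sum_(i < n) \sum_(j < n) x 0 i * M i j * x 0 j.
Proof.
rewrite mxE exchange_big; apply: eq_bigr => j _.
by rewrite !mxE big_distrl.
Qed.

Lemma posdef_diag_gt0 (R : realFieldType) n (M : 'M[R]_n) i : posdef M -> 0 < M i i.
Proof.
have e_neq0 : delta_mx 0 i != 0 :> 'rV[R]_n.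
  by apply/eqP => /matrixP /(_ 0 i) /eqP; rewrite !mxE !eqxx oner_eq0.
by move=> /(_ _ e_neq0); rewrite -rowE trmx_delta -colE !mxE.
Qed.

Lemma sum_tridiag (R : comPzRingType) (m : nat -> nat -> R) (y : nat -> R) n :
    (forall i j, (i.+1 < j)%N -> m i j = 0) -> (forall i j, (j.+1 < i)%N -> m i j = 0) ->
  \sum_(i < n.+1) \sum_(j < n.+1) y i * m i j * y j =
  \sum_(i < n.+1) m i i * y i ^+ 2 + \sum_(i < n) (m i i.+1 + m i.+1 i) * (y i * y i.+1).
Proof.
move=> m_above m_below; elim: n => [|n IHn].
  by rewrite !big_ord1 big_ord0 addr0 /=; ring.
rewrite big_ord_recr /=.
under eq_bigr => i _ do rewrite big_ord_recr /=.
rewrite big_split /= IHn.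
have last_col : \sum_(i < n.+1) y i * m i n.+1 * y n.+1 = y n * m n n.+1 * y n.+1.
  rewrite big_ord_recr /= big1 ?add0r // => i _.
  by rewrite m_above ?mulr0 ?mul0r // ltnS.
have last_row : \sum_(j < n.+2) y n.+1 * m n.+1 j * y j =
    y n.+1 * m n.+1 n * y n + y n.+1 * m n.+1 n.+1 * y n.+1.
  rewrite 2!big_ord_recr /= big1 ?add0r // => j _.
  by rewrite m_below ?mulr0 ?mul0r // ltnS.
rewrite last_col last_row [X in _ = _ + X]big_ord_recr [X in _ = X + _]big_ord_recr /=.
ring.
Qed.

Lemma sum_path_formE (R : comPzRingType) (z : nat -> R) k :
  \sum_(j < k) (2 * z j ^+ 2 - 2 * (z j * z j.+1)) =
  z 0%N ^+ 2 - z k ^+ 2 + \sum_(j < k) (z j - z j.+1) ^+ 2.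
Proof.
elim: k => [|k IHk]; first by rewrite !big_ord0; ring.
by rewrite !big_ord_recr /= IHk; ring.
Qed.

Lemma sum_path_formE_rev (R : comPzRingType) (z : nat -> R) k :
  \sum_(j < k) (2 * z j.+1 ^+ 2 - 2 * (z j * z j.+1)) =
  z k ^+ 2 - z 0%N ^+ 2 + \sum_(j < k) (z j - z j.+1) ^+ 2.
Proof.
elim: k => [|k IHk]; first by rewrite !big_ord0; ring.
by rewrite !big_ord_recr /= IHk; ring.
Qed.

Lemma sum_sqr_diff_eq0 (R : realDomainType) (z : nat -> R) k :
  \sum_(j < k) (z j - z j.+1) ^+ 2 = 0 -> forall i, (i <= k)%N -> z i = z 0%N.
Proof.
elim: k => [|k IHk]; first by move=> _ i; rewrite leqn0 => /eqP ->.
have D_ge0 : 0 <= \sum_(j < k) (z j - z j.+1) ^+ 2.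
  by apply: sumr_ge0 => j _; apply: sqr_ge0.
rewrite big_ord_recr /= => /eqP; rewrite paddr_eq0 ?sqr_ge0 //.
case/andP=> /eqP /IHk z_const; rewrite sqrf_eq0 subr_eq0 => /eqP z_step i.
rewrite leq_eqVlt ltnS => /orP[/eqP -> | /z_const //].
by rewrite -z_step z_const.
Qed.

(* [gramG] and [mS] as functions of nat indices, so that sums can be split at
   the fermionic index a. *)
Definition gramG_nat (R : pzRingType) (a i j : nat) : R :=
  if i == j then (if i == a then 0 else 2%:R)
  else if (i.+1 == j) || (j.+1 == i) then -1 else 0.

Definition mS_nat (R : pzRingType) (a : nat) (r1 r2 : R) (i j : nat) : R :=
  if (i == a) && (j == a) then 1
  else if (i <= a)%N && (j <= a)%N then r1 * gramG_nat R a i j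
  else if (a <= i)%N && (a <= j)%N then r2 * gramG_nat R a i j
  else 0.

Lemma mS_natE (R : pzRingType) a b (r1 r2 : R) (i j : 'I_(a + b + 1)) :
  mS R a b r1 r2 i j = mS_nat a r1 r2 i j.
Proof. by rewrite !mxE. Qed.

Section MSnatEntries.
Variables (R : comPzRingType) (a : nat) (r1 r2 : R).
Local Notation m := (mS_nat a r1 r2).

Local Ltac mS_nat_entry := rewrite /mS_nat /gramG_nat; repeat (case: ifP => ?; try lia); ring.

Lemma gramG_nat_sym i j : gramG_nat R a i j = gramG_nat R a j i.
Proof. by rewrite /gramG_nat eq_sym orbC; case: eqP => // ->. Qed.

Lemma mS_nat_sym i j : m i j = m j i.
Proof.
by rewrite /mS_nat gramG_nat_sym (andbC (j == a)) (andbC (j <= a)%N) (andbC (a <= j)%N).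
Qed.

Lemma mS_nat_far i j : (i.+1 < j)%N -> m i j = 0.
Proof. move=> ?; mS_nat_entry. Qed.

Lemma mS_nat_diag_lt i : (i < a)%N -> m i i = r1 * 2.
Proof. move=> ?; mS_nat_entry. Qed.

Lemma mS_nat_diag_gt i : (a < i)%N -> m i i = r2 * 2.
Proof. move=> ?; mS_nat_entry. Qed.

Lemma mS_nat_fermion : m a a = 1.
Proof. by rewrite /mS_nat eqxx. Qed.

Lemma mS_nat_succ_lt i : (i < a)%N -> m i i.+1 = - r1.
Proof. move=> ?; mS_nat_entry. Qed.

Lemma mS_nat_succ_ge i : (a <= i)%N -> m i i.+1 = - r2.
Proof. move=> ?; mS_nat_entry. Qed.

End MSnatEntries.

Lemma mS_qform (R : comPzRingType) a b (r1 r2 : R) (x : 'rV[R]_(a + b + 1)) (y : nat -> R) :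
    (forall i : 'I_(a + b + 1), x 0 i = y i) ->
  (x *m mS R a b r1 r2 *m x^T) 0 0 =
    r1 * (y 0%N ^+ 2 + \sum_(i < a) (y i - y i.+1) ^+ 2)
  + r2 * (y (a + b)%N ^+ 2 + \sum_(i < b) (y (a + i)%N - y (a + i.+1)%N) ^+ 2)
  + (1 - r1 - r2) * y a ^+ 2.
Proof.
move=> xy; rewrite mxqformE.
under eq_bigr => i _ do under eq_bigr => j _ do rewrite mS_natE !xy.
rewrite addn1 sum_tridiag; last 2 first.
- exact: mS_nat_far.
- by move=> i j ji; rewrite mS_nat_sym mS_nat_far.
rewrite -addnS !big_split_ord big_ord_recl /= addn0 mS_nat_fermion.
have block_a : \sum_(i < a) mS_nat a r1 r2 i i * y i ^+ 2
    + \sum_(i < a) (mS_nat a r1 r2 i i.+1 + mS_nat a r1 r2 i.+1 i) * (y i * y i.+1)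
    = r1 * (y 0%N ^+ 2 - y a ^+ 2 + \sum_(i < a) (y i - y i.+1) ^+ 2).
  rewrite -sum_path_formE -big_split mulr_sumr; apply: eq_bigr => i _ /=.
  rewrite [mS_nat _ _ _ i.+1 i]mS_nat_sym mS_nat_diag_lt ?mS_nat_succ_lt //; ring.
have block_b :
    \sum_(i < b) mS_nat a r1 r2 (a + bump 0 i) (a + bump 0 i) * y (a + bump 0 i)%N ^+ 2
    + \sum_(i < b) (mS_nat a r1 r2 (a + i) (a + i).+1 + mS_nat a r1 r2 (a + i).+1 (a + i))
        * (y (a + i)%N * y (a + i).+1)
    = r2 * (y (a + b)%N ^+ 2 - y a ^+ 2 + \sum_(i < b) (y (a + i)%N - y (a + i.+1)%N) ^+ 2).
  have := sum_path_formE_rev (fun t => y (a + t)%N) b; rewrite /= addn0 => <-.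
  rewrite -big_split mulr_sumr; apply: eq_bigr => i _ /=.
  rewrite /bump add1n !addnS [mS_nat _ _ _ (a + i).+1 (a + i)]mS_nat_sym.
  rewrite mS_nat_diag_gt ?mS_nat_succ_ge ?leq_addr ?ltnS ?leq_addr //; ring.
have regroup (p q s t u : R) : p + (q + s) + (t + u) = (p + t) + (s + u) + q by ring.
rewrite regroup block_a block_b; ring.
Qed.

Lemma mS_posdef (R : realFieldType) a b (r1 r2 : R) :
  0 < r1 -> 0 < r2 -> r1 + r2 <= 1 -> posdef (mS R a b r1 r2).
Proof.
move=> r1_gt0 r2_gt0 r12_le1 x x_neq0.
pose y k := oapp (x 0) 0 (insub k).
have xy (i : 'I_(a + b + 1)) : x 0 i = y i by rewrite /y valK.
rewrite (mS_qform r1 r2 xy).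
set DL := \sum_(i < a) _; set DR := \sum_(i < b) _.
have DL_ge0 : 0 <= DL by apply: sumr_ge0 => i _; apply: sqr_ge0.
have DR_ge0 : 0 <= DR by apply: sumr_ge0 => i _; apply: sqr_ge0.
have PL_ge0 := addr_ge0 (sqr_ge0 (y 0%N)) DL_ge0.
have PR_ge0 := addr_ge0 (sqr_ge0 (y (a + b)%N)) DR_ge0.
have r1PL_ge0 := mulr_ge0 (ltW r1_gt0) PL_ge0.
have r2PR_ge0 := mulr_ge0 (ltW r2_gt0) PR_ge0.
have Y_ge0 : 0 <= (1 - r1 - r2) * y a ^+ 2 by rewrite mulr_ge0 ?sqr_ge0 //; lra.
rewrite lt_def !addr_ge0 // andbT; apply: contra x_neq0.
rewrite !paddr_eq0 ?addr_ge0 // !mulf_eq0 (gt_eqF r1_gt0) (gt_eqF r2_gt0) /=.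
rewrite (paddr_eq0 (sqr_ge0 _) DL_ge0) (paddr_eq0 (sqr_ge0 _) DR_ge0) sqrf_eq0.
case/andP=> /andP[/andP[/eqP y0 /eqP DL0] /andP[_ /eqP DR0]] _.
have y_left i : (i <= a)%N -> y i = 0 by move=> /(sum_sqr_diff_eq0 DL0) ->.
have y_right i : (i <= b)%N -> y (a + i)%N = 0.
  move=> /(sum_sqr_diff_eq0 (z := fun t => y (a + t)%N) DR0) /= ->.
  by rewrite addn0 y_left.
apply/eqP/matrixP => i j; rewrite ord1 mxE xy.
have [le_ja | lt_aj] := leqP j a; first exact: y_left.
by rewrite -(subnKC (ltnW lt_aj)) y_right //; have := ltn_ord j; lia.
Qed.

Lemma mS_diag_le1 (R : realFieldType) a b (r1 r2 : R) :
  r1 <= 2^-1 -> r2 <= 2^-1 -> forall i, mS R a b r1 r2 i i <= 1.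
Proof.
move=> r1_le r2_le i; rewrite mS_natE.
have [lt_ia | lt_ai | ->] := ltngtP i a.
- by rewrite mS_nat_diag_lt //; lra.
- by rewrite mS_nat_diag_gt //; lra.
- by rewrite mS_nat_fermion.
Qed.

Lemma natr_divS_mulr_lt (R : numFieldType) n (r : R) : 0 < r -> n%:R / n.+1%:R * r < r.
Proof.
by move=> r_gt0; rewrite gtr_pMl // ltr_pdivrMr ?ltr0n // mul1r ltr_nat ltnSn.
Qed.

Theorem mainTheorem8 (R : realFieldType) (a b : nat) (ha : (1 <= a)%N) (hb : (1 <= b)%N)
  (r1 r2 : R) :
  (posdef (mS R a b r1 r2) /\ (forall i, mS R a b r1 r2 i i <= 1)) <->
  [/\ 0 < r1 <= 2^-1, 0 < r2 <= 2^-1 &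
      (a%:R / (a.+1)%:R) * r1 + (b%:R / (b.+1)%:R) * r2 < 1].
Proof.
have lt_0n : (0 < a + b + 1)%N by lia.
have lt_abn : (a + b < a + b + 1)%N by rewrite addn1.
pose first := Ordinal lt_0n; pose last := Ordinal lt_abn.
have mS_first : mS R a b r1 r2 first first = r1 * 2 by rewrite mS_natE mS_nat_diag_lt.
have mS_last : mS R a b r1 r2 last last = r2 * 2.
  by rewrite mS_natE mS_nat_diag_gt //=; lia.
split=> [[pd diag_le1] | [/andP[r1_gt0 r1_le] /andP[r2_gt0 r2_le] _]].
  have := posdef_diag_gt0 first pd; have := diag_le1 first.
  have := posdef_diag_gt0 last pd; have := diag_le1 last.
  rewrite mS_first mS_last => r2_le r2_gt0 r1_le r1_gt0.
  have r1_pos : 0 < r1 by lra.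
  have r2_pos : 0 < r2 by lra.
  split; [apply/andP; split => //; lra | apply/andP; split => //; lra |].
  apply: lt_le_trans (ltrD (natr_divS_mulr_lt a r1_pos) (natr_divS_mulr_lt b r2_pos)) _.
  lra.
split; [apply: mS_posdef => //; lra | exact: mS_diag_le1].
Qed.
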